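(* Let $N\geq 3$ be an odd integer. For real $\theta$ and $\varepsilon\geq 0$ let $G_\theta(\varepsilon)=(1+\theta)^N+\big(1-\theta(1+\varepsilon)\big)^N-2$ and $\varepsilon_c(\theta)=\inf\{\varepsilon>0: G_\theta(\varepsilon)\leq 0\}$ (with $\inf\emptyset=+\infty$). For positive $\theta\neq 2^{1/N}-1$ define $$f(\theta)=\big(2-(1+\theta)^N\big)^{1/N}-1+\theta(1+\theta)^{N-1}\big(2-(1+\theta)^N\big)^{\frac1N-1}.$$ Then on the interval $\theta>2^{1/N}-1$ the function $\varepsilon_c$ is differentiable with derivative $$\varepsilon_c'(\theta)=\frac{f(\theta)}{\theta^2},$$ and $\varepsilon_c$ has a unique stationary point in this interval, at which it attains its maximum value over the interval $\theta>2^{1/N}-1$ (being increasing before this point and decreasing after it).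
   Context: Root convention: for real $X>0$, $X^{1/N}$ is the positive real $N$-th root; for $X<0$ and $N$ odd, $X^{1/N}=-|X|^{1/N}$; and for an integer $m$, $X^{1/N-m}$ is defined as $Y^{1/N}$ with $Y=X^{1-mN}$, evaluated by the same convention. For $\theta>2^{1/N}-1$ one has $2-(1+\theta)^N<0$, so these conventions are in force; in this range $\varepsilon_c(\theta)=\frac{1-(2-(1+\theta)^N)^{1/N}}{\theta}-1$. *)

From HB Require Import structures.
From mathcomp Require Import all_boot all_order all_algebra.
From mathcomp Require Import all_classical all_reals all_analysis.
Set Implicit Arguments. Unset Strict Implicit. Unset Printing Implicit Defensive.
Import Order.TTheory GRing.Theory Num.Theory.
Import numFieldNormedType.Exports.
Local Open Scope classical_set_scope.
Local Open Scope ring_scope.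

(* Real N-th root with the paper's convention: positive root for x >= 0,
   and -|x|^{1/N} for x < 0 (meaningful for N odd). *)
Definition oddroot {R : realType} (N : nat) (x : R) : R :=
  if 0 <= x then x `^ (N%:R^-1) else - ((- x) `^ (N%:R^-1)).

(* X^{1/N - 1} := Y^{1/N} with Y = X^{1-N} (convention with m = 1). *)
Definition oddroot_m1 {R : realType} (N : nat) (x : R) : R :=
  oddroot N (x ^- N.-1).

Definition Gth {R : realType} (N : nat) (theta eps : R) : R :=
  (1 + theta) ^+ N + (1 - theta * (1 + eps)) ^+ N - 2.

Definition eps_c {R : realType} (N : nat) (theta : R) : \bar R :=
  ereal_inf [set (e%:E)%E | e in [set e : R | 0 < e /\ Gth N theta e <= 0]].

Definition fth {R : realType} (N : nat) (theta : R) : R :=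
  oddroot N (2 - (1 + theta) ^+ N) - 1
  + theta * (1 + theta) ^+ N.-1 * oddroot_m1 N (2 - (1 + theta) ^+ N).

Definition theta0 {R : realType} (N : nat) : R := (2 : R) `^ (N%:R^-1) - 1.

From HB Require Import structures.
From mathcomp Require Import all_boot all_order all_algebra.
From mathcomp Require Import all_classical all_reals all_analysis.
From mathcomp Require Import ring lra.
Import Order.TTheory GRing.Theory Num.Theory.
Import numFieldNormedType.Exports.
Local Open Scope classical_set_scope.
Local Open Scope ring_scope.
Set Implicit Arguments. Unset Strict Implicit.

(* Above the threshold put rho(t) = ((1+t)^N - 2)^{1/N} > 0.  As N is odd,
   G_t(e) <= 0 iff 1 - t(1+e) <= -rho(t), so eps_c(t) = (1 + rho(t))/t - 1,
   which is positive because rho(t) > t - 1.  Differentiating gives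
   eps_c' = f/t^2 with f = g/rho^{N-1} and g(t) = 2 - (1+t)^{N-1} - rho(t)^{N-1}.
   The function g is strictly decreasing, positive close to the threshold and
   negative at t = 1, so it has exactly one zero ts; eps_c increases before ts
   and decreases after it. *)

Lemma exprn_powR_invn {R : realType} (n : nat) (x : R) : (0 < n)%N -> 0 <= x ->
  (x `^ n%:R^-1) ^+ n = x.
Proof.
move=> n0 x0; rewrite -powR_mulrn ?powR_ge0 // -powRrM mulVf ?powRr1 //.
by rewrite pnatr_eq0 -lt0n.
Qed.

Lemma powR_invn_exprn {R : realType} (n : nat) (y : R) : (0 < n)%N -> 0 <= y ->
  (y ^+ n) `^ n%:R^-1 = y.
Proof.
move=> n0 y0; rewrite -powR_mulrn // -powRrM mulfV ?powRr1 //.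
by rewrite pnatr_eq0 -lt0n.
Qed.

Lemma exprN_odd {R : pzRingType} (n : nat) (x : R) : odd n -> (- x) ^+ n = - x ^+ n.
Proof. by move=> on; rewrite exprNn -signr_odd on expr1 mulN1r. Qed.

Lemma ltr_oddXn2 {R : realDomainType} (n : nat) : odd n ->
  {homo (fun x : R => x ^+ n) : x y / x < y}.
Proof.
move=> on x y xy; have n0 : (0 < n)%N by case: n on.
have [x0|x0] := leP 0 x.
  by rewrite ltr_pXn2r // nnegrE // (le_trans x0) // ltW.
have [y0|y0] := leP y 0.
  by rewrite -ltrN2 -!exprN_odd // ltr_pXn2r ?nnegrE ?ltrN2 ?oppr_ge0 // ltW.
by rewrite (@lt_trans _ _ 0) ?exprn_odd_lt0 ?exprn_odd_gt0.
Qed.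

Lemma ler_oddXn2 {R : realDomainType} (n : nat) : odd n ->
  {mono (fun x : R => x ^+ n) : x y / x <= y}.
Proof. by move=> on; apply: le_mono; apply: ltr_oddXn2. Qed.

Lemma exprDn_ge {R : realDomainType} (n : nat) (x y : R) : 0 <= x -> 0 <= y ->
  (0 < n)%N -> x ^+ n + y ^+ n <= (x + y) ^+ n.
Proof.
move=> x0 y0; elim: n => [//|[|n] IH _]; first by rewrite !expr1.
have Xx : 0 <= x ^+ n.+1 by rewrite exprn_ge0.
have Xy : 0 <= y ^+ n.+1 by rewrite exprn_ge0.
rewrite !(exprS _ n.+1); have := IH isT; nra.
Qed.

Lemma is_derive_exprn {R : numFieldType} (f : R -> R) (n : nat) (x v df : R) :
  is_derive x v f df -> is_derive x v (fun y => f y ^+ n) (n%:R * f x ^+ n.-1 * df).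
Proof. by move=> fd; rewrite -exprfctE; exact: is_deriveX. Qed.

(* In the paper's odd-root convention (2 - (1+t)^N)^{1/N} = - rho N t above
   the threshold. *)
Definition rho {R : realType} (N : nat) (t : R) : R := ((1 + t) ^+ N - 2) `^ N%:R^-1.

Definition eps_cr {R : realType} (N : nat) (t : R) : R := (1 + rho N t) / t - 1.

Definition fth_num {R : realType} (N : nat) (t : R) : R :=
  2 - (1 + t) ^+ N.-1 - rho N t ^+ N.-1.

Section Threshold.
Context {R : realType} {N : nat}.
Hypothesis N3 : (3 <= N)%N.

Let N_gt0 : (0 < N)%N. Proof. by case: N N3. Qed.
Let Npred_gt0 : (0 < N.-1)%N. Proof. by rewrite -ltnS prednK // ltnW. Qed.
Let two_ltX : (2 : R) < 2 ^+ N.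
Proof. by rewrite -[X in X < _]expr1 ltr_eXn2l ?ltr1n // ltnW. Qed.

Lemma root2_bounds : 1 < (2 : R) `^ N%:R^-1 < 2.
Proof.
have p0 : 0 <= (2 : R) `^ N%:R^-1 by exact: powR_ge0.
have pN : ((2 : R) `^ N%:R^-1) ^+ N = 2 by rewrite exprn_powR_invn.
apply/andP; split; first by rewrite -(ltr_pXn2r N_gt0) ?nnegrE // expr1n pN ltr1n.
by rewrite -(ltr_pXn2r N_gt0) ?nnegrE // pN.
Qed.

Lemma gt_theta0 (t : R) : theta0 N < t -> 0 < t /\ 2 < (1 + t) ^+ N.
Proof.
have /andP[p1 p2] := root2_bounds; rewrite /theta0 => ht; split; first lra.
rewrite -[X in X < _](@exprn_powR_invn R N 2) // ltr_pXn2r ?nnegrE ?powR_ge0 //; lra.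
Qed.

Lemma theta0_lt1 : theta0 N < 1 :> R.
Proof. by have /andP[_ p2] := root2_bounds; rewrite /theta0; lra. Qed.

Lemma rho_gt0 (t : R) : theta0 N < t -> 0 < rho N t.
Proof. by move=> /gt_theta0[_ ?]; apply: powR_gt0; lra. Qed.

Lemma rho_exprn (t : R) : theta0 N < t -> rho N t ^+ N = (1 + t) ^+ N - 2.
Proof. by move=> /gt_theta0[_ ?]; rewrite exprn_powR_invn //; lra. Qed.

Lemma subr1_lt_rho (t : R) : theta0 N < t -> t - 1 < rho N t.
Proof.
move=> ht; have r0 := rho_gt0 ht; have [t1|t1] := leP t 1; first lra.
have : (t - 1) ^+ N + 2 ^+ N <= (1 + t) ^+ N.
  by rewrite (_ : 1 + t = t - 1 + 2); [apply: exprDn_ge => //; lra | lra].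
rewrite -(ltr_pXn2r N_gt0) ?nnegrE ?rho_exprn //; have := two_ltX; lra.
Qed.

Lemma fth_num_decreasing (a b : R) : theta0 N < a -> a < b -> fth_num N b < fth_num N a.
Proof.
move=> ha ab; have hb := lt_trans ha ab.
have [a0 _] := gt_theta0 ha; have ra := rho_gt0 ha; have rb := rho_gt0 hb.
have X_lt n : (0 < n)%N -> (1 + a) ^+ n < (1 + b) ^+ n.
  by move=> n0; rewrite ltr_pXn2r ?nnegrE //; lra.
have r_lt : rho N a < rho N b.
  by rewrite -(ltr_pXn2r N_gt0) ?nnegrE ?ltW // !rho_exprn // ltrD2r X_lt.
have r_ltX : rho N a ^+ N.-1 < rho N b ^+ N.-1 by rewrite ltr_pXn2r ?nnegrE ?ltW.
by rewrite /fth_num; have := X_lt _ Npred_gt0; lra.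
Qed.

Lemma fth_num_inj (a b : R) : theta0 N < a -> theta0 N < b ->
  fth_num N a = fth_num N b -> a = b.
Proof.
move=> ha hb fab; case: (ltgtP a b) => [ab|ba|//].
  by have := fth_num_decreasing ha ab; rewrite fab ltxx.
by have := fth_num_decreasing hb ba; rewrite fab ltxx.
Qed.

Let is_derive_shift1 (t : R) : is_derive t 1 (fun y : R => 1 + y) 1.
Proof. by apply: is_derive_eq; rewrite add0r mulr1. Qed.

Lemma rho_derive (t : R) : theta0 N < t ->
  is_derive t 1 (rho N) ((1 + t) ^+ N.-1 / rho N t ^+ N.-1).
Proof.
move=> ht; have [_ X2] := gt_theta0 ht; have r0 := rho_gt0 ht.
have X0 : 0 < (1 + t) ^+ N - 2 by lra.
have dX := is_deriveB (is_derive_exprn N (is_derive_shift1 t)) (is_derive_cst (2 : R) t 1).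
pose X := (fun y : R => (1 + y) ^+ N) - cst 2.
apply: (is_derive_eq (is_derive1_comp (g := X) (is_derive1_powR _ X0) dX)).
rewrite /X /= powRB; last by rewrite (gt_eqF X0) implybT.
have rS : rho N t ^+ N = rho N t * rho N t ^+ N.-1 by rewrite -exprS prednK.
rewrite powRr1 ?ltW // -/(rho N t) -rho_exprn // rS subr0.
by field; rewrite expf_neq0 (gt_eqF r0) ?pnatr_eq0 -?lt0n.
Qed.

Lemma fth_num_derivable (t : R) : theta0 N < t -> derivable (fth_num N) t 1.
Proof.
move=> ht; have [dF _] := is_deriveB
  (is_deriveB (is_derive_cst (2 : R) t 1) (is_derive_exprn N.-1 (is_derive_shift1 t)))
  (is_derive_exprn N.-1 (rho_derive ht)).
exact: dF.
Qed.

Lemma exists_fth_num_gt0 : exists2 a : R, theta0 N < a & 0 < fth_num N a.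
Proof.
have /andP[p1 p2] := root2_bounds.
set p := 2 `^ N%:R^-1 in p1 p2; set s := (p - 1) / 2.
have s0 : 0 < s by rewrite /s; lra.
have sXn k : (0 < k)%N -> 0 <= s ^+ k <= s.
  have s1 : s <= 1 by rewrite /s; lra.
  by move=> k0; rewrite exprn_ge0 ?ler_iXnr // ltW.
have /andP[sN0 sN] := sXn _ N_gt0; have /andP[sNm0 sNm] := sXn _ Npred_gt0.
(* The witness a satisfies 1 + a = u and rho N a = s; then
   u * fth_num N a >= 2 (u - 1) - 3 s > 2 (p - 1) - 3 s > 0. *)
set u := (2 + s ^+ N) `^ N%:R^-1.
have uN : u ^+ N = 2 + s ^+ N by rewrite exprn_powR_invn //; lra.
have u0 : 0 <= u by exact: powR_ge0.
have pu : p < u.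
  have pN : p ^+ N = 2 by rewrite exprn_powR_invn.
  by rewrite -(ltr_pXn2r N_gt0) ?nnegrE ?powR_ge0 // uN pN ltrDl exprn_gt0.
have u2 : u <= 2.
  rewrite -(ler_pXn2r N_gt0) ?nnegrE // uN.
  have : (2 : R) ^+ 2 <= 2 ^+ N by rewrite ler_eXn2l ?ltr1n // ltnW.
  rewrite /s in sN; lra.
exists (u - 1); first by rewrite /theta0 -/p; lra.
have u1 : 1 + (u - 1) = u by rewrite addrC subrK.
rewrite /fth_num u1.
have -> : rho N (u - 1) = s.
  by rewrite /rho u1 uN addrAC subrr add0r powR_invn_exprn ?ltW.
have uNm : u ^+ N = u * u ^+ N.-1 by rewrite -exprS prednK.
have us : u * s ^+ N.-1 <= 2 * s by rewrite ler_pM.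
have u_gt0 : 0 < u by lra.
rewrite -(pmulr_rgt0 _ u_gt0).
rewrite /s in us sN *; lra.
Qed.

Lemma fth_num1_lt0 : fth_num N 1 < 0 :> R.
Proof.
have r0 := rho_gt0 theta0_lt1.
have X2 : (2 : R) <= (1 + 1) ^+ N.-1.
  by rewrite -[leLHS]expr1 ler_eXn2l ?ltr1n // -ltnS prednK.
by rewrite /fth_num; have := exprn_gt0 N.-1 r0; lra.
Qed.

Lemma exists_fth_num_root : exists2 ts : R, theta0 N < ts & fth_num N ts = 0.
Proof.
have [a ha fa] := exists_fth_num_gt0; have f1 := fth_num1_lt0.
have a1 : a <= 1.
  by rewrite leNgt; apply/negP => /(fth_num_decreasing theta0_lt1); lra.
have cont : {within `[a, 1], continuous fth_num N}.
  apply: derivable_within_continuous => x; rewrite in_itv /= => /andP[ax _].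
  exact: fth_num_derivable (lt_le_trans ha ax).
have [|ts] := IVT (v := 0) a1 cont.
  by rewrite ge_min le_max; apply/andP; split; apply/orP; [right | left]; lra.
by rewrite in_itv /= => /andP[ats _] fts; exists ts => //; apply: lt_le_trans ats.
Qed.

Hypothesis N_odd : odd N.

Lemma Gth_le0E (t e : R) : theta0 N < t -> (Gth N t e <= 0) = (eps_cr N t <= e).
Proof.
move=> ht; have [t0 _] := gt_theta0 ht.
have -> : (Gth N t e <= 0) = ((1 - t * (1 + e)) ^+ N <= (- rho N t) ^+ N).
  by rewrite /Gth exprN_odd // rho_exprn //; apply/idP/idP; lra.
rewrite ler_oddXn2 // /eps_cr [X in _ = X]lerBlDr ler_pdivrMr //; apply/idP/idP; lra.
Qed.

Lemma eps_cr_gt0 (t : R) : theta0 N < t -> 0 < eps_cr N t.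
Proof.
move=> ht; have [t0 _] := gt_theta0 ht; have := subr1_lt_rho ht.
by rewrite /eps_cr subr_gt0 ltr_pdivlMr // mul1r; lra.
Qed.

Lemma eps_cE (t : R) : theta0 N < t -> eps_c N t = (eps_cr N t)%:E.
Proof.
move=> ht; apply/eqP; rewrite eq_le; apply/andP; split.
  apply: ereal_inf_lbound; exists (eps_cr N t) => //.
  by split; [exact: eps_cr_gt0 | rewrite Gth_le0E].
by apply: le_ereal_inf_tmp => _ [e [_ He] <-]; rewrite lee_fin -Gth_le0E.
Qed.

Lemma fthE (t : R) : theta0 N < t ->
  fth N t = t * (1 + t) ^+ N.-1 / rho N t ^+ N.-1 - (1 + rho N t).
Proof.
move=> ht; have r0 := rho_gt0 ht; have [_ X2] := gt_theta0 ht.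
have Neven : ~~ odd N.-1 by case: N N_odd N_gt0 => //= n; rewrite negbK.
have X_lt0 : 2 - (1 + t) ^+ N < 0 by lra.
rewrite /fth /oddroot_m1 /oddroot lt_geF // opprB -/(rho N t).
have -> : (2 - (1 + t) ^+ N) ^- N.-1 = ((rho N t ^+ N.-1)^-1) ^+ N.
  rewrite -opprB -rho_exprn // exprNn -signr_odd (negbTE Neven) mul1r.
  by rewrite exprVn -!exprM mulnC.
rewrite exprn_ge0 ?invr_ge0 ?exprn_ge0 ?powR_invn_exprn ?invr_ge0 ?exprn_ge0 ?ltW //.
lra.
Qed.

Lemma fth_numE (t : R) : theta0 N < t -> fth N t = fth_num N t / rho N t ^+ N.-1.
Proof.
move=> ht; have Q0 : rho N t ^+ N.-1 != 0 by rewrite expf_neq0 // gt_eqF // rho_gt0.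
apply: (mulIf Q0); rewrite fthE // mulfVK // mulrBl mulfVK // /fth_num.
have := rho_exprn ht; rewrite -(prednK N_gt0) !exprS /= => rN; lra.
Qed.

Lemma eps_cr_derive (t : R) : theta0 N < t -> is_derive t 1 (eps_cr N) (fth N t / t ^+ 2).
Proof.
move=> ht; have [t0 _] := gt_theta0 ht.
have dV := is_deriveV (f := id) (lt0r_neq0 t0) (@is_derive_id _ _ t 1).
have dE := is_deriveB (is_deriveM (is_deriveD (is_derive_cst (1 : R) t 1) (rho_derive ht)) dV)
  (is_derive_cst (1 : R) t 1).
apply: (is_derive_eq dE); rewrite fthE // !fctE /GRing.scale /= subr0 add0r.
by field; rewrite (lt0r_neq0 t0) expf_neq0 // lt0r_neq0 // rho_gt0.
Qed.

Lemma eps_c_derive (t : R) : theta0 N < t ->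
  is_derive t 1 (fun y : R => fine (eps_c N y)) (fth N t / t ^+ 2).
Proof.
move=> ht; apply: near_eq_is_derive (eps_cr_derive ht).
by near=> y; rewrite eps_cE //; near: y; exact: lt_nbhsr.
Unshelve. all: by end_near. Qed.

Lemma derive1_eps_cr (x : R) : theta0 N < x ->
  derive1 (eps_cr N) x = fth_num N x / (rho N x ^+ N.-1 * x ^+ 2).
Proof.
move=> hx; rewrite derive1E; have [_ ->] := eps_cr_derive hx.
by rewrite fth_numE // [in RHS]invfM mulrA.
Qed.

Lemma derive1_eps_c_eq0 (t : R) : theta0 N < t ->
  (derive1 (fun y : R => fine (eps_c N y)) t == 0) = (fth_num N t == 0).
Proof.
move=> ht; have [t0 _] := gt_theta0 ht; have r0 := rho_gt0 ht.
rewrite derive1E; have [_ ->] := eps_c_derive ht.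
by rewrite fth_numE // !mulf_eq0 !invr_eq0 !expf_eq0 (gt_eqF r0) (gt_eqF t0) !andbF !orbF.
Qed.

Let itv_theta0 (s t x : R) (b1 b2 : bool) : theta0 N < s ->
  x \in Interval (BSide b1 s) (BSide b2 t) -> theta0 N < x.
Proof.
move=> hs; rewrite in_itv /= => /andP[sx _]; apply: lt_le_trans hs _.
by case: b1 sx => /= [|/ltW].
Qed.

Let eps_cr_derivable (x : R) : theta0 N < x -> derivable (eps_cr N) x 1.
Proof. by move=> hx; have [] := eps_cr_derive hx. Qed.

Lemma eps_c_lt (s t : R) : theta0 N < s -> s < t ->
  {in `]s, t[, forall x, 0 < fth_num N x} -> (eps_c N s < eps_c N t)%E.
Proof.
move=> hs st fpos; rewrite !eps_cE ?(lt_trans hs st) // lte_fin.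
apply: (gtr0_derive1_lt_cc (a := s) (b := t)); rewrite ?in_itv /= ?lexx ?ltW //.
- by move=> x /(itv_theta0 hs); exact: eps_cr_derivable.
- move=> x xst; have hx := itv_theta0 hs xst; have [x0 _] := gt_theta0 hx.
  by rewrite derive1_eps_cr // divr_gt0 ?mulr_gt0 ?exprn_gt0 ?rho_gt0 ?fpos.
- by apply: derivable_within_continuous => x /(itv_theta0 hs); exact: eps_cr_derivable.
Qed.

Lemma eps_c_gt (s t : R) : theta0 N < s -> s < t ->
  {in `]s, t[, forall x, fth_num N x < 0} -> (eps_c N t < eps_c N s)%E.
Proof.
move=> hs st fneg; rewrite !eps_cE ?(lt_trans hs st) // lte_fin.
apply: (ltr0_derive1_lt_cc (a := s) (b := t)); rewrite ?in_itv /= ?lexx ?ltW //.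
- by move=> x /(itv_theta0 hs); exact: eps_cr_derivable.
- move=> x xst; have hx := itv_theta0 hs xst; have [x0 _] := gt_theta0 hx.
  by rewrite derive1_eps_cr // pmulr_llt0 ?invr_gt0 ?mulr_gt0 ?exprn_gt0 ?rho_gt0 ?fneg.
- by apply: derivable_within_continuous => x /(itv_theta0 hs); exact: eps_cr_derivable.
Qed.

End Threshold.

Unset Implicit Arguments.

Theorem lemma3 (R : realType) (N : nat) (hN3 : (3 <= N)%N) (hNodd : odd N) :
  (* eps_c is finite and differentiable on (theta0, +oo) with derivative f/theta^2 *)
  (forall theta : R, theta0 N < theta ->
     eps_c N theta \is a fin_num /\
     is_derive theta 1 (fun t : R => fine (eps_c N t)) (fth N theta / theta ^+ 2)) /\
  (* unique stationary point, a maximum; increasing before, decreasing after *)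
  (exists ts : R,
     theta0 N < ts /\
     [/\ derive1 (fun t : R => fine (eps_c N t)) ts = 0,
         (forall t : R, theta0 N < t -> derive1 (fun u : R => fine (eps_c N u)) t = 0 -> t = ts),
         (forall t : R, theta0 N < t -> (eps_c N t <= eps_c N ts)%E),
         (forall s t : R, theta0 N < s -> s < t -> t <= ts -> (eps_c N s < eps_c N t)%E)
       & (forall s t : R, ts <= s -> s < t -> (eps_c N t < eps_c N s)%E)]).
Proof.
split=> [t ht|]; first by rewrite eps_cE //; split; last exact: eps_c_derive.
have [ts hts fts] := exists_fth_num_root (R := R) hN3.
have inc s t : theta0 N < s -> s < t -> t <= ts -> (eps_c N s < eps_c N t)%E.
  move=> hs st tts; apply: eps_c_lt => // x; rewrite in_itv /= => /andP[sx xt].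
  rewrite -fts; apply: (fth_num_decreasing hN3); [exact: lt_trans hs sx | exact: lt_le_trans xt tts].
have dec s t : ts <= s -> s < t -> (eps_c N t < eps_c N s)%E.
  move=> tss st; apply: (eps_c_gt hN3 hNodd); [exact: lt_le_trans hts tss | done |].
  move=> x; rewrite in_itv /= => /andP[sx _].
  by rewrite -fts; apply: (fth_num_decreasing hN3) => //; exact: le_lt_trans tss sx.
exists ts; split=> //; split.
- by apply/eqP; rewrite derive1_eps_c_eq0 // fts.
- move=> t ht /eqP; rewrite derive1_eps_c_eq0 // -fts => /eqP.
  exact: fth_num_inj.
- move=> t ht; case: (ltgtP t ts) => [tts|tst|->//]; apply: ltW.
    exact: inc.
  exact: dec.
- exact: inc.
- exact: dec.
Qed.
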